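(* The Ewens distribution $p^\star$, $p^\star_N(\pi)=\frac{\prod_{B\in\pi}(b-1)!}{n!}$, is the unique random partition $p$ that generates the potential for TU games and satisfies conditional independence.
   Context: $\mathbf{U}$ is a finite set of players; cardinalities of $N,S,B$ are $n,s,b$. $\Pi(N)$ is the set of partitions of $N$ ($\Pi(\emptyset)=\{\emptyset\}$). A random partition is $p=(p_N)_{N\subseteq\mathbf{U}}$ with $p_N$ a probability distribution on $\Pi(N)$. A TU game on $N$ is $v:2^N\to\mathbb{R}$ with $v(\emptyset)=0$. The potential for TU games is $\mathrm{Pot}(v)=\sum_{\emptyset\ne S\subseteq N}\frac{(s-1)!(n-s)!}{n!}v(S)$ (the unique map vanishing on the empty game with $\sum_{i\in N}[\mathrm{Pot}(v)-\mathrm{Pot}(v|_{2^{N\setminus\{i\}}})]=v(N)$). $p$ generates the potential for TU games if $\sum_{\pi\in\Pi(N)}p_N(\pi)\sum_{B\in\pi}v(B)=\mathrm{Pot}(v)$ for all $N\subseteq\mathbf{U}$ and TU games $v$ on $N$. $p$ satisfies conditional independence if $p_N(\pi)=p_{N\setminus B}(\pi\setminus\{B\})\sum_{\tau\in\Pi(N):B\in\tau}p_N(\tau)$ for all $N\subseteq\mathbf{U}$, $\pi\in\Pi(N)$, $B\in\pi$. *)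

From HB Require Import structures.
From mathcomp Require Import all_boot all_order all_algebra.
Set Implicit Arguments. Unset Strict Implicit. Unset Printing Implicit Defensive.
Import Order.TTheory GRing.Theory Num.Theory.
Local Open Scope ring_scope.

(* Partitions of N: P : {set {set U}} with mathcomp's [partition P N]
   (blocks nonempty, pairwise disjoint, union N); for N = set0 the only
   partition is set0, i.e. Pi(emptyset) = {emptyset}.
   A random partition is a map p : {set U} -> {set {set U}} -> R, where
   p N restricted to the partitions of N is a probability distribution. *)

Section Defs.
Variables (R : realFieldType) (U : finType).

Definition is_random_partition (p : {set U} -> {set {set U}} -> R) : Prop :=
  forall N : {set U},
    (forall P : {set {set U}}, partition P N -> 0 <= p N P) /\
    \sum_(P : {set {set U}} | partition P N) p N P = 1.

(* A TU game on N: v : {set U} -> R with v set0 = 0 (only its values on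
   subsets of N matter). *)
Definition Pot (N : {set U}) (v : {set U} -> R) : R :=
  \sum_(S in powerset N | S != set0)
     (((#|S|.-1)`! * (#|N| - #|S|)`!)%N%:R / (#|N|`!)%:R) * v S.

Definition generates_potential (p : {set U} -> {set {set U}} -> R) : Prop :=
  forall (N : {set U}) (v : {set U} -> R), v set0 = 0 ->
    \sum_(P : {set {set U}} | partition P N) p N P * (\sum_(B in P) v B)
      = Pot N v.

Definition conditional_independence (p : {set U} -> {set {set U}} -> R)
  : Prop :=
  forall (N : {set U}) (P : {set {set U}}) (B : {set U}),
    partition P N -> B \in P ->
    p N P = p (N :\: B) (P :\ B) *
            \sum_(T : {set {set U}} | partition T N && (B \in T)) p N T.

Definition ewens (N : {set U}) (P : {set {set U}}) : R :=
  (\prod_(B in P) ((#|B|.-1)`!)%N%:R) / (#|N|`!)%:R.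

End Defs.

From HB Require Import structures.
From mathcomp Require Import all_boot all_order all_algebra.
From mathcomp Require Import zify ring.
Set Implicit Arguments. Unset Strict Implicit. Unset Printing Implicit Defensive.
Import Order.TTheory GRing.Theory Num.Theory.

(* The Ewens weight prod_B (b-1)! of a partition counts the permutations of N
   whose cycles are its blocks, so these weights sum to n!, and the Ewens
   probability that B is a block is (b-1)!(n-b)!/n!, the Shapley weight of B.
   The expected total worth of the blocks is the sum over B of this block
   probability times v(B), so generating the potential says precisely that
   all block probabilities are Shapley weights (test it on the game that is 1
   on B only).  Conditional independence gives
   p_N(pi) = p_{N\B}(pi\{B}) * Prob(B is a block), so induction on the number
   of blocks forces p = p*. *)

Section PartitionCounting.
Variable U : finType.
Implicit Types (N M A B : {set U}) (T : {set {set U}}).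

Lemma partition_setD_notin T N B :
  B != set0 -> partition T (N :\: B) -> B \notin T.
Proof.
move=> /set0Pn[y yB] pT; apply/negP => BT.
by have /subsetP/(_ y yB) := partitionS pT BT; rewrite inE yB.
Qed.

Lemma big_partition_block (R : Type) (idx : R) (op : Monoid.com_law idx)
    N B (F : {set {set U}} -> R) :
  B != set0 -> B \subset N ->
  \big[op/idx]_(T | partition T N && (B \in T)) F T =
  \big[op/idx]_(T | partition T (N :\: B)) F (B |: T).
Proof.
move=> B0 BN; rewrite (reindex_onto (fun T => B |: T) (fun T => T :\ B)) /=.
  apply: eq_bigl => T; apply/idP/idP => [/andP[/andP[pBT _] /eqP <-]|pT].
    exact: partitionD1 pBT (setU11 _ _).
  rewrite setU11 setU1K ?(partition_setD_notin B0 pT) // eqxx !andbT.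
  have -> : N = B :|: (N :\: B) by rewrite -{1}(setID N B) (setIidPr BN).
  apply: partitionU1 pT B0 _.
  by rewrite disjoints_subset; apply/subsetP => y yB; rewrite !inE yB.
by move=> T /andP[_ BT]; rewrite setD1K.
Qed.

Lemma sum_partition_by_block (R : Type) (idx : R) (op : Monoid.com_law idx)
    N x (F : {set {set U}} -> R) : x \in N ->
  \big[op/idx]_(T | partition T N) F T =
  \big[op/idx]_(A : {set U} | (A \subset N) && (x \in A))
     \big[op/idx]_(T | partition T N && (A \in T)) F T.
Proof.
move=> xN.
transitivity (\big[op/idx]_(T | partition T N)
                 \big[op/idx]_(A : {set U} | (A \in T) && (x \in A)) F T).
  apply: eq_bigr => T pT; rewrite (big_pred1 (pblock T x)) // => A /=.
  have xT : x \in cover T by rewrite (cover_partition pT).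
  apply/andP/eqP => [[AT xA]|->]; last by rewrite pblock_mem // mem_pblock.
  by rewrite (def_pblock (partition_trivIset pT) AT xA).
rewrite (exchange_big_dep (fun A => (A \subset N) && (x \in A))) /=.
  by apply: eq_bigr => A /andP[_ xA]; apply: eq_bigl => T; rewrite xA andbT.
by move=> T A pT /andP[AT ->]; rewrite (partitionS pT AT).
Qed.

Lemma sum_subset_fact M :
  (\sum_(A : {set U} | A \subset M) #|A|`! * (#|M| - #|A|)`!)%N = #|M|.+1`!.
Proof.
set m := #|M|.
rewrite (partition_big (fun A => inord #|A| : 'I_m.+1) xpredT) //=.
rewrite (eq_bigr (fun _ => m`!)) ?sum_nat_const ?card_ord ?factS // => k _.
rewrite (eq_bigr (fun _ => k`! * (m - k)`!)%N); last first.
  move=> A /andP[AM /eqP <-]; rewrite inordK // ltnS.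
  exact: subset_leq_card.
rewrite sum_nat_const -(bin_fact (ltn_ord k : k <= m)%N) -(cards_draws M k).
congr (_ * _)%N; apply: eq_card => A; rewrite !inE.
apply/andP/andP => [[AM /eqP <-]|[AM /eqP Ak]]; split=> //.
  by rewrite inordK // ltnS subset_leq_card.
by apply/eqP/val_inj; rewrite /= -Ak inordK // ltnS subset_leq_card.
Qed.

Lemma sum_subset_mem_fact N x : x \in N ->
  (\sum_(A : {set U} | (A \subset N) && (x \in A))
      (#|A|.-1)`! * (#|N| - #|A|)`!)%N = #|N|`!.
Proof.
move=> xN; rewrite (reindex_onto (fun A => x |: A) (fun A => A :\ x)) /=;
  last by move=> A /andP[_ xA]; rewrite setD1K.
rewrite (eq_bigl (fun A => A \subset N :\ x)) => [|A]; last first.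
  rewrite subsetD1 setU11 andbT subUset sub1set xN /=.
  have [xA|xA] := boolP (x \in A); last by rewrite setU1K // eqxx.
  suff -> : ((x |: A) :\ x == A) = false by rewrite andbF.
  by apply/negbTE/eqP => eA; move: xA; rewrite -eA !inE eqxx.
rewrite [in RHS](cardsD1 x N) xN add1n -sum_subset_fact.
apply: eq_bigr => A /subsetD1P[AN xA].
by rewrite cardsU1 xA add1n (cardsD1 x N) xN add1n subSS.
Qed.

Definition cycle_weight T : nat := \prod_(C in T) (#|C|.-1)`!.

Lemma sum_cycle_weight_block N B : B != set0 -> B \subset N ->
  (\sum_(T | partition T N && (B \in T)) cycle_weight T =
   (#|B|.-1)`! * \sum_(T | partition T (N :\: B)) cycle_weight T)%N.
Proof.
move=> B0 BN; rewrite big_partition_block // big_distrr /=.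
apply: eq_bigr => T pT.
by rewrite /cycle_weight big_setU1 ?(partition_setD_notin B0 pT).
Qed.

Lemma sum_cycle_weight N :
  (\sum_(T | partition T N) cycle_weight T)%N = #|N|`!.
Proof.
have [n] := ubnP #|N|; elim: n N => // n IH N; rewrite ltnS => Nn.
have [->|[x xN]] := set_0Vmem N.
  rewrite (eq_bigl (pred1 set0)) => [|T]; last by rewrite /= partition_set0.
  by rewrite big_pred1_eq /cycle_weight big_set0 cards0.
rewrite (sum_partition_by_block _ _ xN) -(sum_subset_mem_fact xN).
apply: eq_bigr => A /andP[AN xA].
have A0 : A != set0 by apply/set0Pn; exists x.
rewrite sum_cycle_weight_block // IH cardsDS //.
have := subset_leq_card AN; have : (0 < #|A|)%N by rewrite card_gt0.
lia.
Qed.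

Lemma sum_cycle_weight_block_fact N B : B != set0 -> B \subset N ->
  (\sum_(T | partition T N && (B \in T)) cycle_weight T =
   (#|B|.-1)`! * (#|N| - #|B|)`!)%N.
Proof.
by move=> B0 BN; rewrite sum_cycle_weight_block // sum_cycle_weight cardsDS.
Qed.

End PartitionCounting.

Local Open Scope ring_scope.

Section RandomPartitions.
Variables (R : realFieldType) (U : finType).
Implicit Types (p q : {set U} -> {set {set U}} -> R) (N B : {set U})
  (P T : {set {set U}}).

Definition block_prob p N B : R :=
  \sum_(T | partition T N && (B \in T)) p N T.

Definition shapley_weight N B : R :=
  ((#|B|.-1)`! * (#|N| - #|B|)`!)%N%:R / (#|N|`!)%:R.

Lemma natr_fact_neq0 n : (n`!)%:R != 0 :> R.
Proof. by rewrite pnatr_eq0 -lt0n fact_gt0. Qed.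

Lemma ewensE N P : ewens R N P = (cycle_weight P)%:R / (#|N|`!)%:R.
Proof. by rewrite /ewens /cycle_weight natr_prod. Qed.

Lemma ewens_random_partition : is_random_partition (@ewens R U).
Proof.
move=> N; split=> [P _|]; first by rewrite ewensE divr_ge0 ?ler0n.
under eq_bigr do rewrite ewensE.
by rewrite -big_distrl /= -natr_sum sum_cycle_weight divff ?natr_fact_neq0.
Qed.

Lemma block_prob_ewens N B : B != set0 -> B \subset N ->
  block_prob (@ewens R U) N B = shapley_weight N B.
Proof.
move=> B0 BN; rewrite /block_prob; under eq_bigr do rewrite ewensE.
by rewrite -big_distrl /= -natr_sum sum_cycle_weight_block_fact.
Qed.

Lemma ewens_setD_block N P B : partition P N -> B \in P ->
  ewens R N P = ewens R (N :\: B) (P :\ B) * shapley_weight N B.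
Proof.
move=> pP BP; rewrite !ewensE /shapley_weight /cycle_weight (big_setD1 _ BP).
rewrite cardsDS ?(partitionS pP BP) // !natrM.
by field; rewrite !natr_fact_neq0.
Qed.

Lemma ewens_conditional_independence : conditional_independence (@ewens R U).
Proof.
move=> N P B pP BP; rewrite -/(block_prob _ N B) block_prob_ewens.
- exact: ewens_setD_block.
- exact: partition_neq0 pP BP.
- exact: partitionS pP BP.
Qed.

Lemma sum_partition_blocksE p N (v : {set U} -> R) :
  \sum_(P | partition P N) p N P * (\sum_(B in P) v B) =
  \sum_(B in powerset N | B != set0) block_prob p N B * v B.
Proof.
under eq_bigr do rewrite big_distrr /=.
rewrite (exchange_big_dep (fun B => (B \in powerset N) && (B != set0))) /=.
  by apply: eq_bigr => B _; rewrite big_distrl.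
by move=> P B pP BP; rewrite powersetE (partitionS pP BP) (partition_neq0 pP BP).
Qed.

Lemma generates_potentialP p :
  generates_potential p <->
  (forall N B, B != set0 -> B \subset N -> block_prob p N B = shapley_weight N B).
Proof.
split=> [gp N S S0 SN | bp N v _]; last first.
  rewrite sum_partition_blocksE; apply: eq_bigr => B /andP[BN B0].
  by rewrite bp // -powersetE.
have := gp N (fun B => (B == S)%:R); rewrite eq_sym (negbTE S0) => /(_ erefl).
have SP : (S \in powerset N) && (S != set0) by rewrite powersetE SN.
rewrite sum_partition_blocksE /Pot (bigD1 S SP) [in RHS](bigD1 S SP) /=.
rewrite !eqxx !mulr1 !big1 ?addr0 // => B /andP[_ /negbTE ->]; exact: mulr0.
Qed.

Lemma random_partition_set0 p : is_random_partition p -> p set0 set0 = 1.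
Proof.
move=> /(_ set0)[_]; rewrite (eq_bigl (pred1 set0)) ?big_pred1_eq // => T.
by rewrite /= partition_set0.
Qed.

Lemma conditional_independence_unique p q :
  conditional_independence p -> conditional_independence q ->
  p set0 set0 = q set0 set0 ->
  (forall N B, B != set0 -> B \subset N -> block_prob p N B = block_prob q N B) ->
  forall N P, partition P N -> p N P = q N P.
Proof.
move=> cip ciq pq0 bpq N P; have [n] := ubnP #|P|; elim: n N P => // n IH N P.
rewrite ltnS => Pn pP; have [P0|[B BP]] := set_0Vmem P.
  by move: pP; rewrite P0 => /cover_partition; rewrite /cover big_set0 => <-.
have -> : p N P = p (N :\: B) (P :\ B) * block_prob p N B := cip N P B pP BP.
have -> : q N P = q (N :\: B) (P :\ B) * block_prob q N B := ciq N P B pP BP.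
rewrite bpq ?(partition_neq0 pP BP) ?(partitionS pP BP) //.
rewrite (IH _ _ _ (partitionD1 pP BP)) //.
by move: Pn; rewrite (cardsD1 B P) BP.
Qed.

End RandomPartitions.

Theorem proposition3 (R : realFieldType) (U : finType) :
  (is_random_partition (@ewens R U) /\
   generates_potential (@ewens R U) /\
   conditional_independence (@ewens R U)) /\
  (forall p : {set U} -> {set {set U}} -> R,
     is_random_partition p -> generates_potential p ->
     conditional_independence p ->
     forall (N : {set U}) (P : {set {set U}}),
       partition P N -> p N P = ewens R N P).
Proof.
split.
  split; first exact: ewens_random_partition.
  split; last exact: ewens_conditional_independence.
  by apply/generates_potentialP; exact: block_prob_ewens.
move=> p rp /generates_potentialP p_potential ci.
apply: conditional_independence_unique ci (@ewens_conditional_independence R U) _ _.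
  rewrite (random_partition_set0 rp).
  by rewrite (random_partition_set0 (@ewens_random_partition R U)).
by move=> N B B0 BN; rewrite p_potential // block_prob_ewens.
Qed.
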